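(* Let $n=2m+1$ be odd with $n\ge5$, and work in the polynomial ring $\mathbb Z_2[R,V_1,\dots,V_{n-1}]$ (no relations imposed). Let $D_n=\binom{n-1}{m+1}=\binom{n-1}{m-1}$, and enumerate the $(m+1)$-element subsets of $\{1,\dots,n-1\}$ as $L_1,\dots,L_{D_n}$. For each $i$ set $$p_i=\sum_{S\subset L_i,\ |S|=m-1}R\prod_{j\in S}V_j,\qquad f_i=\sum_{S\subset L_i,\ |S|\le m-2}R^{|L_i|-|S|-1}\prod_{j\in S}V_j$$ (the second sum including $S=\emptyset$). Let $$X_{m+1}=\Big\{\xi=(\xi_1,\dots,\xi_{D_n})\in(\mathbb Z_2)^{D_n}:\ \sum_{i=1}^{D_n}\xi_ip_i=0\Big\}.$$ Then (i) $\dim_{\mathbb Z_2}X_{m+1}=\beta_n$, where $\beta_n=D_n-\alpha_n$ and $\alpha_n=\sum_{i=0}^{m-1}2^{m-1-i}\binom{2i}{i}$; and (ii) for any basis $\Omega_{m+1}$ of $X_{m+1}$, the polynomials $F_\xi=\sum_{i=1}^{D_n}\xi_if_i$, $\xi\in\Omega_{m+1}$, are linearly independent over $\mathbb Z_2$.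
   Context: $\mathbb Z_2=\mathbb Z/2\mathbb Z$. Note $p_i+f_i=\sum_{S\subset L_i,\,|S|\le m-1}R^{|L_i-S|-1}\prod_{j\in S}V_j$. *)

From HB Require Import structures.
From Stdlib Require Import ClassicalEpsilon.
From mathcomp Require Import all_boot all_order all_algebra.
Set Implicit Arguments. Unset Strict Implicit. Unset Printing Implicit Defensive.
Import GRing.Theory.
Local Open Scope ring_scope.

(* Variable V_j (1 <= j <= n-1) is indexed by j-1 : 'I_(n.-1).
   A monomial R^a * prod_j V_j^(e_j) is the pair (a, e).
   A polynomial is represented by its coefficient function
   (only finitely supported ones occur below); two polynomials are equal
   iff all their coefficients agree. *)
Definition mono (n : nat) := (nat * {ffun 'I_n.-1 -> nat})%type.
Definition zpoly (n : nat) := mono n -> 'F_2.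

Definition monom n (a : nat) (S : {set 'I_n.-1}) : mono n :=
  (a, [ffun j => nat_of_bool (j \in S)]).

Definition mpoly n (a : nat) (S : {set 'I_n.-1}) : zpoly n :=
  fun mu => (mu == monom a S)%:R.

Definition p_pol n m (L : {set 'I_n.-1}) : zpoly n :=
  fun mu => \sum_(S : {set 'I_n.-1} | (S \subset L) && (#|S| == m.-1)%N)
              mpoly 1 S mu.

Definition f_pol n m (L : {set 'I_n.-1}) : zpoly n :=
  fun mu => \sum_(S : {set 'I_n.-1} | (S \subset L) && (#|S| <= m - 2)%N)
              mpoly (#|L| - #|S| - 1) S mu.

Definition lincomb n D (xi : 'rV['F_2]_D) (P : 'I_D -> zpoly n) : zpoly n :=
  fun mu => \sum_(i < D) xi 0 i * P i mu.

Definition zpoly_is0 n (P : zpoly n) : Prop := forall mu, P mu = 0.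

Definition asbool (P : Prop) : bool :=
  if excluded_middle_informative P then true else false.

Definition Xspace n D (P : 'I_D -> zpoly n) : {vspace 'rV['F_2]_D} :=
  <<[seq xi <- enum 'rV['F_2]_D | asbool (zpoly_is0 (lincomb xi P))]>>%VS.

Definition alpha (m : nat) : nat :=
  (\sum_(i < m) 2 ^ (m.-1 - i) * 'C(i.*2, i))%N.

Definition beta (n m : nat) : nat := ('C(n.-1, m.+1) - alpha m)%N.

(* Write m = k + 1, so that the L_i are all the (k+2)-subsets of a ground set of
   2k+2 points. The coefficient of R V_S in sum_i xi_i p_i (for |S| = k) and of
   R^(k+1-|S|) V_S in sum_i xi_i f_i (for |S| <= k-1) are both the sum of the xi_i
   over the L_i containing S. Hence X_{m+1} is the kernel of the transposed inclusion
   map from functions on (k+2)-sets to functions on k-sets, over F_2.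
   (i) Fix two points a, b of the ground set A and put A' = A - {a, b}. A kernel
   element x for (j+3)-sets of A is determined by its values on the subsets of A',
   on a + M and on b + M (the kernel equation at T subset of A' gives x(a + b + T));
   adding to x(a + M) and x(b + M) the upper sum of x|A' turns them into kernel
   elements for (j+2)-sets of A', while x|A' is arbitrary. Only the parities of the
   binomials counting the chains S subset M subset L enter, and the resulting
   recursion for the dimension is the one satisfied by C(2k+2, k+2) - alpha_(k+1).
   (ii) If moreover sum_i xi_i f_i = 0, the sums above vanish for every |S| <= k.
   Adding them up over the subsets S of the k-element complement C of L_i counts
   each xi_j 2^|C :&: L_j| times, an odd number only for j = i; so xi_i = 0. *)

From HB Require Import structures.
From mathcomp Require Import all_boot all_order all_algebra all_field zify.
From Stdlib Require Import ClassicalEpsilon.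
Import GRing.Theory.
Local Open Scope ring_scope.

Set Implicit Arguments. Unset Strict Implicit. Unset Printing Implicit Defensive.

Lemma pchar_F2 : 2 \in [pchar 'F_2]. Proof. exact: pchar_Fp. Qed.

Lemma natr_F2 n : (n%:R : 'F_2) = (odd n)%:R.
Proof. by rewrite -(Fp_nat_mod (isT : prime 2)) modn2. Qed.

Lemma addrr_F2 (x : 'F_2) : x + x = 0.
Proof. by apply: addrr_pchar2; apply: pchar_F2. Qed.

Lemma addr_eq0_F2 (x y : 'F_2) : x + y = 0 -> x = y.
Proof. by move/eqP; rewrite addr_eq0 (oppr_pchar2 pchar_F2) => /eqP. Qed.

Section UpperSums.
Variable U : finType.
Implicit Types (A B S T L M : {set U}) (h e : {set U} -> 'F_2).
Implicit Types g : {ffun {set U} -> 'F_2}.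

Lemma setD1_id x S : x \notin S -> S :\ x = S.
Proof.
move=> xS; apply/setP => y; rewrite !inE; case: eqVneq => // ->.
by rewrite (negPf xS).
Qed.

Lemma card_setD1 L x t : x \in L -> #|L| = t.+1 -> #|L :\ x| = t.
Proof. by move=> xL; rewrite (cardsD1 x L) xL add1n => -[]. Qed.

Lemma card_between S L r : S \subset L -> (#|S| <= r)%N ->
  #|[set M : {set U} | (S \subset M) && (M \subset L) && (#|M| == r)]| =
  'C(#|L| - #|S|, r - #|S|).
Proof.
move=> SL Sr; have ->: (#|L| - #|S|)%N = #|L :\: S|.
  by rewrite cardsD (setIidPr SL).
rewrite -cards_draws.
have SUK B : B \subset L :\: S -> (S :|: B) :\: S = B.
  move=> BLS; rewrite setDUl setDv set0U; apply/setDidPl.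
  by move: BLS; rewrite subsetD => /andP[].
have inj : {in [set B : {set U} | B \subset L :\: S & #|B| == (r - #|S|)%N] &,
    injective (fun B => S :|: B)}.
  move=> B1 B2; rewrite !inE => /andP[h1 _] /andP[h2 _] e.
  by rewrite -(SUK _ h1) -(SUK _ h2) e.
rewrite -(card_in_imset inj); apply: eq_card => M; rewrite inE.
apply/idP/imsetP => [/andP[/andP[SM ML] /eqP cM]|[B]].
  exists (M :\: S); last by rewrite -{1}(setID M S) (setIidPr SM).
  by rewrite inE setSD //= cardsD (setIidPr SM) cM eqxx.
rewrite inE => /andP[BLS /eqP cB] ->.
have BL : B \subset L by apply: subset_trans BLS (subsetDl _ _).
have SB0 : S :&: B = set0.
  apply/setP=> x; rewrite !inE; apply/negbTE; apply/negP=> /andP[xS xB].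
  by move: (subsetP BLS x xB); rewrite inE xS.
by rewrite subsetUl subUset SL BL cardsU SB0 cards0 subn0 cB subnKC // eqxx.
Qed.

Definition tsubsets A t := [set L : {set U} | (L \subset A) && (#|L| == t)].

Lemma card_tsubsets B t : #|tsubsets B t| = 'C(#|B|, t).
Proof. by rewrite -cards_draws; apply: eq_card => L; rewrite !inE. Qed.

Lemma mem_tsubsets B t L : L \subset B -> (L \in tsubsets B t) = (#|L| == t).
Proof. by rewrite inE => ->. Qed.

Definition upsum B t h S : 'F_2 :=
  \sum_(L : {set U} | L \subset B) (if (#|L| == t) && (S \subset L) then h L else 0).

Lemma eq_upsum B t h1 h2 S :
  (forall L, L \subset B -> #|L| = t -> S \subset L -> h1 L = h2 L) ->
  upsum B t h1 S = upsum B t h2 S.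
Proof.
by move=> e; apply: eq_bigr => L LB; case: ifP => // /andP[/eqP cL SL]; apply: e.
Qed.

Lemma upsumD B t h1 h2 S :
  upsum B t (fun L => h1 L + h2 L) S = upsum B t h1 S + upsum B t h2 S.
Proof.
by rewrite /upsum -big_split; apply: eq_bigr => L _; case: (_ && _); rewrite /= ?addr0.
Qed.

Lemma upsum_id B t h S : S \subset B -> #|S| = t -> upsum B t h S = h S.
Proof.
move=> SB cS; rewrite /upsum (bigD1 S) //= cS eqxx subxx big1 ?addr0 //.
move=> L /andP[_ LS]; case: ifP => // /andP[/eqP cL SL].
by move: LS; rewrite eq_sym eqEcard SL cL cS leqnn.
Qed.

Lemma upsum_full B t h S : S \subset B -> #|B| = t -> upsum B t h S = h B.
Proof.
move=> SB cB; rewrite /upsum (bigD1 B) //= cB eqxx SB big1 ?addr0 //.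
move=> L /andP[LB LS]; case: ifP => // /andP[/eqP cL _].
by move: LS; rewrite eqEcard LB cL cB leqnn.
Qed.

Lemma upsum_out B t h S x : x \in S -> x \notin B -> upsum B t h S = 0.
Proof.
move=> xS xB; apply: big1 => L LB; case: ifP => // /andP[_ SL].
by move: xB; rewrite (subsetP LB x (subsetP SL x xS)).
Qed.

Lemma upsum_eq0 B t h S :
  (forall L, L \in tsubsets B t -> h L = 0) -> upsum B t h S = 0.
Proof.
move=> h0; apply: big1 => L LB; case: ifP => // /andP[cL _].
by apply: h0; rewrite inE LB.
Qed.

Lemma upsum_comp B r t h S : (#|S| <= r)%N ->
  upsum B r (upsum B t h) S = 'C(t - #|S|, r - #|S|)%:R * upsum B t h S.
Proof.
move=> Sr; rewrite /upsum.
transitivity (\sum_(M : {set U} | M \subset B) \sum_(L : {set U} | L \subset B)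
  (if ((#|M| == r) && (S \subset M)) && ((#|L| == t) && (M \subset L))
   then h L else 0)).
  by apply: eq_bigr => M _; case: ifP => //= _; rewrite big1.
rewrite exchange_big mulr_sumr; apply: eq_bigr => L LB.
have [/andP[/eqP cL SL]|hL] := boolP ((#|L| == t) && (S \subset L)); last first.
  rewrite mulr0; apply: big1 => M _; case: ifP => // /andP[/andP[_ SM] /andP[cL ML]].
  by move: hL; rewrite cL (subset_trans SM ML).
rewrite -big_mkcondr sumr_const mulr_natl -cL -card_between //; congr (_ *+ _).
apply: eq_card => M; rewrite unfold_in inE /= eqxx.
have [ML|] := boolP (M \subset L); last by rewrite !andbF.
by rewrite (subset_trans ML LB) /= !andbT andbC.
Qed.

Section Composition.
Variables (B : {set U}) (h : {set U} -> 'F_2) (S : {set U}) (j : nat).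
Hypothesis cS : #|S| = j.

Lemma upsum_comp_parity r t : (r <= t)%N ->
  upsum B (r + j) (upsum B (t + j) h) S = (odd 'C(t, r))%:R * upsum B (t + j) h S.
Proof. by move=> rt; rewrite upsum_comp cS ?leq_addl // !addnK natr_F2. Qed.

Lemma upsum_comp21 : upsum B j.+1 (upsum B j.+2 h) S = 0.
Proof. by rewrite (upsum_comp_parity (r := 1) (t := 2)) // mul0r. Qed.

Lemma upsum_comp31 : upsum B j.+1 (upsum B j.+3 h) S = upsum B j.+3 h S.
Proof. by rewrite (upsum_comp_parity (r := 1) (t := 3)) // mul1r. Qed.

Lemma upsum_comp32 : upsum B j.+2 (upsum B j.+3 h) S = upsum B j.+3 h S.
Proof. by rewrite (upsum_comp_parity (r := 2) (t := 3)) // mul1r. Qed.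

Lemma upsum_comp42 : upsum B j.+2 (upsum B j.+4 h) S = 0.
Proof. by rewrite (upsum_comp_parity (r := 2) (t := 4)) // mul0r. Qed.

Lemma upsum_comp43 : upsum B j.+3 (upsum B j.+4 h) S = 0.
Proof. by rewrite (upsum_comp_parity (r := 3) (t := 4)) // mul0r. Qed.

End Composition.

Lemma sum_subsetD1 B x (F : {set U} -> 'F_2) : x \in B ->
  \sum_(L : {set U} | L \subset B) F L =
  \sum_(L : {set U} | L \subset B :\ x) (F L + F (x |: L)).
Proof.
move=> xB; rewrite big_split /= (bigID (fun L : {set U} => x \in L)) /= addrC.
congr (_ + _); first by apply: eq_bigl => L; rewrite subsetD1.
rewrite (reindex_onto (fun L => x |: L) (fun L => L :\ x)) /=; last first.
  by move=> L /andP[_ xL]; apply: setD1K.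
apply: eq_bigl => L; rewrite setU11 andbT subUset sub1set xB /= subsetD1.
have [xL|xL] := boolP (x \in L); last by rewrite setU1K // eqxx andbT.
rewrite andbF; case: eqP => [e|_]; last by rewrite andbF.
by move: (setD11 x (x |: L)); rewrite e xL.
Qed.

Lemma upsum_split2 A a b t h S : a \in A -> b \in A -> a != b ->
  upsum A t.+2 h S =
  upsum (A :\ a :\ b) t.+2 h S
  + upsum (A :\ a :\ b) t.+1 (fun M => h (a |: M)) (S :\ a)
  + upsum (A :\ a :\ b) t.+1 (fun M => h (b |: M)) (S :\ b)
  + upsum (A :\ a :\ b) t (fun M => h (a |: (b |: M))) (S :\ a :\ b).
Proof.
move=> aA bA ab; have bAa : b \in A :\ a by rewrite !inE eq_sym ab.
rewrite /upsum (sum_subsetD1 _ aA) (sum_subsetD1 _ bAa) !big_split /= !addrA.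
congr (_ + _ + _ + _); apply: eq_bigr => L; rewrite !subsetD1 => /andP[/andP[_ aL] bL].
- by rewrite cardsU1 aL eqSS -subDset.
- by rewrite cardsU1 bL eqSS -subDset.
have abL : a \notin b |: L by rewrite !inE negb_or ab.
by rewrite cardsU1 cardsU1 bL abL !eqSS -!subDset.
Qed.

Definition funs_on B t := [set g : {ffun {set U} -> 'F_2} |
  [forall L, (L \notin tsubsets B t) ==> (g L == 0)]].

Definition upker A k := [set g in funs_on A k.+2 |
  [forall S in tsubsets A k, upsum A k.+2 g S == 0]].

Lemma funs_onI B t g :
  (forall L, L \notin tsubsets B t -> g L = 0) -> g \in funs_on B t.
Proof. by move=> g0; rewrite inE; apply/forallP => L; apply/implyP => /g0 ->. Qed.

Lemma upkerI A k g : g \in funs_on A k.+2 ->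
  (forall S, S \in tsubsets A k -> upsum A k.+2 g S = 0) -> g \in upker A k.
Proof. by move=> gA g0; rewrite inE gA; apply/forall_inP => S /g0 ->. Qed.

Lemma upker_funs_on A k g : g \in upker A k -> g \in funs_on A k.+2.
Proof. by rewrite inE => /andP[]. Qed.

Lemma card_funs_on B t : #|funs_on B t| = (2 ^ 'C(#|B|, t))%N.
Proof.
transitivity #|pffun_on (0 : 'F_2) (tsubsets B t) predT|; last first.
  by rewrite card_pffun_on card_tsubsets card_Fp.
apply: eq_card => g; rewrite inE; apply/forallP/pffun_onP => [g0|[g0 _] L].
  split=> // ; apply/subsetP => L; rewrite supportE; apply: contraR => LS.
  by have /implyP/(_ LS)/eqP -> := g0 L; rewrite eqxx.
by apply/implyP; apply: contraNT => /(subsetP g0).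
Qed.

Lemma funs_on_out B t g L : g \in funs_on B t -> L \notin tsubsets B t -> g L = 0.
Proof. by rewrite inE => /forallP/(_ L)/implyP g0 /g0/eqP. Qed.

Lemma upker_upsum A k g S :
  g \in upker A k -> S \in tsubsets A k -> upsum A k.+2 g S = 0.
Proof. by rewrite inE => /andP[_ /forall_inP g0] /g0/eqP. Qed.

Lemma upker_upsum3 A k g S : g \in upker A k.+1 -> #|S| = k -> upsum A k.+3 g S = 0.
Proof.
move=> gK cS; rewrite -(upsum_comp31 _ _ cS); apply: upsum_eq0 => M.
exact: upker_upsum gK.
Qed.

Definition restr B t (e : {set U} -> 'F_2) : {ffun {set U} -> 'F_2} :=
  [ffun L => if L \in tsubsets B t then e L else 0].

Lemma restr_funs_on B t e : restr B t e \in funs_on B t.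
Proof. by apply: funs_onI => L LB; rewrite ffunE (negPf LB). Qed.

Lemma restrE B t e L : L \subset B -> #|L| = t -> restr B t e L = e L.
Proof. by move=> LB cL; rewrite ffunE mem_tsubsets // cL eqxx. Qed.

Lemma upsum_restr B t e S : upsum B t (restr B t e) S = upsum B t e S.
Proof. by apply: eq_upsum => L LB cL _; rewrite restrE. Qed.

Lemma eq_restr B t e g : g \in funs_on B t ->
  (forall L, L \subset B -> #|L| = t -> e L = g L) -> restr B t e = g.
Proof.
move=> gB eg; apply/ffunP => L; rewrite ffunE.
case: ifP => [|/negbT LB]; last by rewrite (funs_on_out gB LB).
by rewrite inE => /andP[LB /eqP cL]; apply: eg.
Qed.

Section Split.
Variables (A : {set U}) (a b : U) (j : nat).
Hypotheses (aA : a \in A) (bA : b \in A) (ab : a != b).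
Local Notation A' := (A :\ a :\ b).

Lemma sub_rest L : (L \subset A') = [&& L \subset A, a \notin L & b \notin L].
Proof. by rewrite !subsetD1 andbA. Qed.

Lemma a_notin_rest : a \notin A'.
Proof. by rewrite !inE eqxx andbF. Qed.

Lemma b_notin_rest : b \notin A'.
Proof. by rewrite !inE eqxx. Qed.

Lemma a_notin_U1b L : L \subset A' -> a \notin b |: L.
Proof. by rewrite sub_rest !inE negb_or ab => /and3P[_ -> _]. Qed.

Lemma b_notin_U1a L : L \subset A' -> b \notin a |: L.
Proof. by rewrite sub_rest !inE negb_or eq_sym ab => /and3P[_ _ ->]. Qed.

Lemma setD1a_sub_rest L : L \subset A -> b \notin L -> L :\ a \subset A'.
Proof.
move=> LA bL; rewrite sub_rest !inE eqxx /= negb_and bL orbT !andbT.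
exact: subset_trans (subD1set _ _) LA.
Qed.

Lemma setD1b_sub_rest L : L \subset A -> a \notin L -> L :\ b \subset A'.
Proof.
move=> LA aL; rewrite sub_rest !inE eqxx /= negb_and aL orbT !andbT.
exact: subset_trans (subD1set _ _) LA.
Qed.

Lemma mem_tsubsets_rest L t : L \subset A' -> (L \in tsubsets A t) = (#|L| == t).
Proof. by rewrite sub_rest inE => /and3P[-> _ _]. Qed.

Lemma mem_tsubsets_a L t : L \subset A' -> (a |: L \in tsubsets A t.+1) = (#|L| == t).
Proof.
move=> LA; move: (LA); rewrite sub_rest => /and3P[LA0 aL _].
by rewrite inE subUset sub1set aA LA0 cardsU1 aL eqSS.
Qed.

Lemma mem_tsubsets_b L t : L \subset A' -> (b |: L \in tsubsets A t.+1) = (#|L| == t).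
Proof.
move=> LA; move: (LA); rewrite sub_rest => /and3P[LA0 _ bL].
by rewrite inE subUset sub1set bA LA0 cardsU1 bL eqSS.
Qed.

Lemma mem_tsubsets_ab L t : L \subset A' ->
  (a |: (b |: L) \in tsubsets A t.+2) = (#|L| == t).
Proof.
move=> LA; move: (LA); rewrite sub_rest => /and3P[LA0 _ bL].
rewrite inE !subUset !sub1set aA bA LA0 cardsU1 cardsU1 bL (a_notin_U1b LA).
by rewrite !eqSS.
Qed.

Definition split_codom := setX (setX (upker A' j) (upker A' j)) (funs_on A' j.+3).

(* The bijection [upker A j.+1 -> split_codom] of step (i); [kerglue] is its inverse. *)
Definition kersplit (x : {ffun {set U} -> 'F_2}) :=
  (restr A' j.+2 (fun M => x (a |: M) + upsum A' j.+3 x M),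
   restr A' j.+2 (fun M => x (b |: M) + upsum A' j.+3 x M),
   restr A' j.+3 x).

Section Glue.
Variable p : {ffun {set U} -> 'F_2} * {ffun {set U} -> 'F_2} * {ffun {set U} -> 'F_2}.

Definition glue_a M := p.1.1 M + upsum A' j.+3 p.2 M.
Definition glue_b M := p.1.2 M + upsum A' j.+3 p.2 M.
Definition glue_ab T :=
  upsum A' j.+2 glue_a T + upsum A' j.+2 glue_b T + upsum A' j.+3 p.2 T.

Definition kerglue := restr A j.+3 (fun L =>
  if a \in L then (if b \in L then glue_ab (L :\ a :\ b) else glue_a (L :\ a))
  else if b \in L then glue_b (L :\ b) else p.2 L).

Lemma kerglue_rest M : M \subset A' -> kerglue M = if #|M| == j.+3 then p.2 M else 0.
Proof.
move=> MA; move: (MA); rewrite sub_rest => /and3P[_ aM bM].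
by rewrite ffunE mem_tsubsets_rest // (negPf aM) (negPf bM).
Qed.

Lemma kerglue_a M : M \subset A' ->
  kerglue (a |: M) = if #|M| == j.+2 then glue_a M else 0.
Proof.
move=> MA; move: (MA); rewrite sub_rest => /and3P[_ aM _].
by rewrite ffunE mem_tsubsets_a // setU11 (negPf (b_notin_U1a MA)) setU1K.
Qed.

Lemma kerglue_b M : M \subset A' ->
  kerglue (b |: M) = if #|M| == j.+2 then glue_b M else 0.
Proof.
move=> MA; move: (MA); rewrite sub_rest => /and3P[_ _ bM].
by rewrite ffunE mem_tsubsets_b // (negPf (a_notin_U1b MA)) setU11 setU1K.
Qed.

Lemma kerglue_ab M : M \subset A' ->
  kerglue (a |: (b |: M)) = if #|M| == j.+1 then glue_ab M else 0.
Proof.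
move=> MA; move: (MA); rewrite sub_rest => /and3P[_ _ bM].
have bM' : b \in a |: (b |: M) by rewrite !inE eqxx orbT.
by rewrite ffunE mem_tsubsets_ab // setU11 bM' setU1K ?(a_notin_U1b MA) // setU1K.
Qed.

Lemma upsum_kerglue S : upsum A' j.+3 kerglue S = upsum A' j.+3 p.2 S.
Proof. by apply: eq_upsum => M MA cM _; rewrite kerglue_rest // cM eqxx. Qed.

Lemma upsum_split2_kerglue S : upsum A j.+3 kerglue S =
  upsum A' j.+3 p.2 S + upsum A' j.+2 glue_a (S :\ a) + upsum A' j.+2 glue_b (S :\ b)
  + upsum A' j.+1 glue_ab (S :\ a :\ b).
Proof.
rewrite (upsum_split2 _ _ _ aA bA ab) upsum_kerglue.
congr (_ + _ + _ + _); apply: eq_upsum => M MA cM _.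
- by rewrite kerglue_a // cM eqxx.
- by rewrite kerglue_b // cM eqxx.
by rewrite kerglue_ab // cM eqxx.
Qed.

Lemma upsum_glue_a S : #|S| = j ->
  upsum A' j.+2 glue_a S = upsum A' j.+2 p.1.1 S + upsum A' j.+3 p.2 S.
Proof. by move=> cS; rewrite upsumD (upsum_comp32 _ _ cS). Qed.

Lemma upsum_glue_b S : #|S| = j ->
  upsum A' j.+2 glue_b S = upsum A' j.+2 p.1.2 S + upsum A' j.+3 p.2 S.
Proof. by move=> cS; rewrite upsumD (upsum_comp32 _ _ cS). Qed.

Lemma upsum_glue_ab S : #|S| = j -> upsum A' j.+1 glue_ab S = upsum A' j.+3 p.2 S.
Proof.
move=> cS; rewrite !upsumD (upsum_comp21 _ _ cS) (upsum_comp21 _ _ cS).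
by rewrite (upsum_comp31 _ _ cS) !add0r.
Qed.

Hypothesis pT : p \in split_codom.

Lemma codom_a : p.1.1 \in upker A' j.
Proof. by move: pT; rewrite !inE => /andP[/andP[]]. Qed.

Lemma codom_b : p.1.2 \in upker A' j.
Proof. by move: pT; rewrite !inE => /andP[/andP[]]. Qed.

Lemma codom_0 : p.2 \in funs_on A' j.+3.
Proof. by move: pT; rewrite !inE => /andP[]. Qed.

Lemma upsum_glue_ab_eq0 i S : j = i.+1 -> #|S| = i -> upsum A' j.+1 glue_ab S = 0.
Proof.
move=> ji cS; have := codom_a; have := codom_b; rewrite ji => bK aK.
rewrite !upsumD ji (upsum_comp32 _ _ cS) (upsum_comp32 _ _ cS) (upsum_comp42 _ _ cS).
rewrite /glue_a /glue_b !upsumD ji (upsum_comp43 _ _ cS).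
by rewrite (upker_upsum3 aK cS) (upker_upsum3 bK cS) !addr0.
Qed.

Lemma kerglue_upker : kerglue \in upker A j.+1.
Proof.
apply: upkerI => [|S]; first exact: restr_funs_on.
rewrite inE => /andP[SA /eqP cS]; rewrite upsum_split2_kerglue.
have [aS|aS] := boolP (a \in S); have [bS|bS] := boolP (b \in S).
- have bSa : b \in S :\ a by rewrite !inE eq_sym ab.
  have aSb : a \in S :\ b by rewrite !inE ab.
  rewrite (upsum_out _ _ aS a_notin_rest) (upsum_out _ _ bSa b_notin_rest).
  rewrite (upsum_out _ _ aSb a_notin_rest) !add0r.
  have cSa := card_setD1 aS cS.
  have j_gt0 : (0 < j)%N by rewrite -cSa; apply/card_gt0P; exists b.
  apply: (upsum_glue_ab_eq0 (i := j.-1)); first by rewrite prednK.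
  by apply: card_setD1 bSa _; rewrite prednK.
- have cSa := card_setD1 aS cS.
  have Sa : S :\ a \in tsubsets A' j by rewrite mem_tsubsets ?setD1a_sub_rest ?cSa.
  have bSa : b \notin S :\ a by rewrite !inE (negPf bS) andbF.
  rewrite (setD1_id bS) (setD1_id bSa).
  rewrite (upsum_out _ _ aS a_notin_rest) (upsum_out _ _ aS a_notin_rest) add0r addr0.
  rewrite (upsum_glue_a cSa) (upsum_glue_ab cSa) (upker_upsum codom_a Sa) add0r.
  exact: addrr_F2.
- have cSb := card_setD1 bS cS.
  have Sb : S :\ b \in tsubsets A' j by rewrite mem_tsubsets ?setD1b_sub_rest ?cSb.
  rewrite (setD1_id aS) (upsum_out _ _ bS b_notin_rest) (upsum_out _ _ bS b_notin_rest).
  rewrite !add0r.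
  rewrite (upsum_glue_b cSb) (upsum_glue_ab cSb) (upker_upsum codom_b Sb) add0r.
  exact: addrr_F2.
have SA' : S \subset A' by rewrite sub_rest SA aS bS.
rewrite (setD1_id aS) (setD1_id bS) (upsum_id _ SA' cS) /glue_ab.
by rewrite [X in _ + X]addrC [X in _ + X]addrA addrr_F2.
Qed.

Lemma kerglueK : kersplit kerglue = p.
Proof.
transitivity (p.1.1, p.1.2, p.2); last by case: (p) => [[]].
congr (_, _, _); apply: eq_restr => [|M MA cM].
- exact: upker_funs_on codom_a.
- by rewrite kerglue_a // cM eqxx upsum_kerglue -addrA addrr_F2 addr0.
- exact: upker_funs_on codom_b.
- by rewrite kerglue_b // cM eqxx upsum_kerglue -addrA addrr_F2 addr0.
- exact: codom_0.
by rewrite kerglue_rest // cM eqxx.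
Qed.

End Glue.

Section KernelEquations.
Variable x : {ffun {set U} -> 'F_2}.
Hypothesis xK : x \in upker A j.+1.

Lemma upker_ab T : T \subset A' -> #|T| = j.+1 ->
  x (a |: (b |: T)) = upsum A' j.+2 (fun M => x (a |: M)) T
     + upsum A' j.+2 (fun M => x (b |: M)) T + upsum A' j.+3 x T.
Proof.
move=> TA cT; move: (TA); rewrite sub_rest => /and3P[_ aT bT].
have := upker_upsum (S := T) xK; rewrite mem_tsubsets_rest // cT eqxx => /(_ isT).
rewrite (upsum_split2 _ _ _ aA bA ab) (setD1_id aT) (setD1_id bT) (upsum_id _ TA cT).
by move/addr_eq0_F2 <-; rewrite [RHS]addrC addrA.
Qed.

Lemma upker_a S : S \subset A' -> #|S| = j ->
  upsum A' j.+2 (fun M => x (a |: M)) S = upsum A' j.+1 (fun M => x (a |: (b |: M))) S.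
Proof.
move=> SA cS; move: (SA); rewrite sub_rest => /and3P[_ aS bS].
have := upker_upsum (S := a |: S) xK; rewrite mem_tsubsets_a // cS eqxx => /(_ isT).
rewrite (upsum_split2 _ _ _ aA bA ab) (setU1K aS) (setD1_id bS).
rewrite (setD1_id (b_notin_U1a SA)).
by rewrite !(upsum_out _ _ (setU11 a S) a_notin_rest) add0r addr0 => /addr_eq0_F2.
Qed.

Lemma upker_b S : S \subset A' -> #|S| = j ->
  upsum A' j.+2 (fun M => x (b |: M)) S = upsum A' j.+1 (fun M => x (a |: (b |: M))) S.
Proof.
move=> SA cS; move: (SA); rewrite sub_rest => /and3P[_ aS bS].
have := upker_upsum (S := b |: S) xK; rewrite mem_tsubsets_b // cS eqxx => /(_ isT).
rewrite (upsum_split2 _ _ _ aA bA ab) (setD1_id (a_notin_U1b SA)) (setU1K bS).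
by rewrite !(upsum_out _ _ (setU11 b S) b_notin_rest) !add0r => /addr_eq0_F2.
Qed.

Lemma upsum_upker_ab S : S \subset A' -> #|S| = j ->
  upsum A' j.+1 (fun M => x (a |: (b |: M))) S = upsum A' j.+3 x S.
Proof.
move=> SA cS; rewrite (eq_upsum (h2 := fun T => upsum A' j.+2 (fun M => x (a |: M)) T
   + upsum A' j.+2 (fun M => x (b |: M)) T + upsum A' j.+3 x T)); last first.
  by move=> T TA cT _; apply: upker_ab.
rewrite !upsumD (upsum_comp21 _ _ cS) (upsum_comp21 _ _ cS).
by rewrite (upsum_comp31 _ _ cS) !add0r.
Qed.

Lemma kersplit_codom : kersplit x \in split_codom.
Proof.
rewrite !in_setX restr_funs_on andbT; apply/andP; split.
- apply: upkerI => [|S]; first exact: restr_funs_on.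
  rewrite inE => /andP[SA /eqP cS]; rewrite upsum_restr upsumD (upsum_comp32 _ _ cS).
  by rewrite (upker_a SA cS) (upsum_upker_ab SA cS) addrr_F2.
- apply: upkerI => [|S]; first exact: restr_funs_on.
  rewrite inE => /andP[SA /eqP cS]; rewrite upsum_restr upsumD (upsum_comp32 _ _ cS).
  by rewrite (upker_b SA cS) (upsum_upker_ab SA cS) addrr_F2.
Qed.

Lemma glue_a_kersplit M : M \subset A' -> #|M| = j.+2 ->
  glue_a (kersplit x) M = x (a |: M).
Proof.
by move=> MA cM; rewrite /glue_a restrE // upsum_restr -addrA addrr_F2 addr0.
Qed.

Lemma glue_b_kersplit M : M \subset A' -> #|M| = j.+2 ->
  glue_b (kersplit x) M = x (b |: M).
Proof.
by move=> MA cM; rewrite /glue_b restrE // upsum_restr -addrA addrr_F2 addr0.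
Qed.

Lemma kersplitK : kerglue (kersplit x) = x.
Proof.
apply: eq_restr => [|L LA cL]; first exact: upker_funs_on xK.
have [aL|aL] := boolP (a \in L); have [bL|bL] := boolP (b \in L).
- have bLa : b \in L :\ a by rewrite !inE eq_sym ab.
  have TA : L :\ a :\ b \subset A' by apply: setSD; apply: setSD.
  have cT := card_setD1 bLa (card_setD1 aL cL).
  rewrite -[in RHS](setD1K aL) -[in RHS](setD1K bLa) (upker_ab TA cT).
  rewrite /glue_ab /= upsum_restr.
  congr (_ + _ + _); apply: eq_upsum => M MA cM _.
    exact: glue_a_kersplit.
  exact: glue_b_kersplit.
- by rewrite glue_a_kersplit ?setD1a_sub_rest ?(card_setD1 aL cL) // setD1K.
- by rewrite glue_b_kersplit ?setD1b_sub_rest ?(card_setD1 bL cL) // setD1K.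
have LA' : L \subset A' by rewrite sub_rest LA aL bL.
by rewrite /= restrE.
Qed.

End KernelEquations.

Lemma card_upker_split :
  #|upker A j.+1| = (#|upker A' j| * #|upker A' j| * 2 ^ 'C(#|A'|, j.+3))%N.
Proof.
have inj : {in upker A j.+1 &, injective kersplit}.
  by move=> x y xK yK e; rewrite -(kersplitK xK) -(kersplitK yK) e.
rewrite -(card_in_imset inj).
have -> : kersplit @: upker A j.+1 = split_codom.
  apply/setP => p; apply/imsetP/idP => [[x xK ->]|pT]; first exact: kersplit_codom.
  by exists (kerglue p); [exact: kerglue_upker | rewrite kerglueK].
by rewrite !cardsX card_funs_on.
Qed.

End Split.

Fixpoint upker_dim k :=
  if k is j.+1 then ((upker_dim j).*2 + 'C(j.*2.+2, j.+3))%N else 0%N.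

Theorem card_upker k A : #|A| = k.*2.+2 -> #|upker A k| = (2 ^ upker_dim k)%N.
Proof.
elim: k A => [|j IH] A cA.
  rewrite (@eq_card1 _ [ffun _ => 0]) // => g; apply/idP/eqP => [gK|->]; last first.
    apply: upkerI => [|S _]; first by apply: funs_onI => L; rewrite ffunE.
    by apply: upsum_eq0 => L; rewrite ffunE.
  apply/ffunP => L; rewrite ffunE.
  have [LA|LA] := boolP (L \in tsubsets A 2).
    2: exact: funs_on_out (upker_funs_on gK) LA.
  have -> : L = A.
    by move: LA; rewrite inE => /andP[LA /eqP cL]; apply/eqP; rewrite eqEcard LA cL cA.
  by rewrite -(upsum_full g (sub0set A) cA) (upker_upsum gK) // inE sub0set cards0.
have [a aA] : {a | a \in A} by apply/sigW/card_gt0P; rewrite cA.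
have [b] : {b | b \in A :\ a} by apply/sigW/card_gt0P; rewrite (card_setD1 aA cA).
rewrite !inE => /andP[ba bA].
have cA' : #|A :\ a :\ b| = j.*2.+2.
  by apply: card_setD1; rewrite ?inE ?ba // (card_setD1 aA cA) doubleS.
by rewrite (card_upker_split j aA bA) 1?eq_sym // IH // cA' -!expnD addnn.
Qed.

End UpperSums.

Lemma alphaS m : alpha m.+1 = ((alpha m).*2 + 'C(m.*2, m))%N.
Proof.
rewrite /alpha big_ord_recr /= subnn expn0 mul1n; congr (_ + _)%N.
rewrite -mul2n big_distrr /=; apply: eq_bigr => i _.
rewrite mulnA -expnS; congr (2 ^ _ * _)%N; have := ltn_ord i; lia.
Qed.

Lemma upker_dim_alpha k : (upker_dim k + alpha k.+1 = 'C(k.*2.+2, k.+2))%N.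
Proof.
elim: k => [|k IH]; first by rewrite /alpha big_ord1.
rewrite /= alphaS.
have e1 := binS (k.*2.+3) (k.+2).
have e2 := binS (k.*2.+2) (k.+1).
have e3 := binS (k.*2.+2) (k.+2).
rewrite doubleS; move: IH e1 e2 e3; rewrite -!addnn; lia.
Qed.

Lemma card_vspace_F2 D (V : {vspace 'rV['F_2]_D}) : #|V| = (2 ^ \dim V)%N.
Proof. by rewrite card_vspace card_Fp. Qed.

Lemma asboolP (P : Prop) : asbool P = true <-> P.
Proof. by rewrite /asbool; case: excluded_middle_informative. Qed.

Lemma lincomb_sum n D K (c : 'I_K -> 'F_2) (v : 'I_K -> 'rV['F_2]_D)
    (P : 'I_D -> zpoly n) mu :
  lincomb (\sum_(k < K) c k *: v k) P mu = \sum_(k < K) c k * lincomb (v k) P mu.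
Proof.
rewrite /lincomb; under eq_bigr do rewrite summxE mulr_suml.
rewrite exchange_big; apply: eq_bigr => k _; rewrite mulr_sumr.
by apply: eq_bigr => i _; rewrite mxE mulrA.
Qed.

Lemma memXspace n D (P : 'I_D -> zpoly n) xi :
  xi \in Xspace P <-> zpoly_is0 (lincomb xi P).
Proof.
rewrite /Xspace; set s := [seq _ <- _ | _]; split => [xiP mu|xiP]; last first.
  by apply: memv_span; rewrite mem_filter mem_enum andbT; apply/asboolP.
rewrite (coord_span (X := in_tuple s) xiP) lincomb_sum big1 // => i _.
have : s`_i \in s by apply: mem_nth.
by rewrite mem_filter => /andP[/asboolP -> _]; rewrite mulr0.
Qed.

Lemma eq_monom n a a' S S' :
  (@monom n a S == @monom n a' S') = (a == a') && (S == S').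
Proof.
rewrite /monom xpair_eqE; congr (_ && _); apply/eqP/eqP => [/ffunP eSS'|->//].
by apply/setP => j; move: (eSS' j); rewrite !ffunE; case: (j \in S); case: (j \in S').
Qed.

Lemma sum_eq_natr (R : nzSemiRingType) (I : finType) (P : pred I) y :
  \sum_(x | P x) ((x == y)%:R : R) = (P y)%:R.
Proof.
rewrite big_mkcond (bigD1 y) //= eqxx big1 ?addr0; first by case: (P y).
by move=> x /negPf ->; case: (P x).
Qed.

Lemma p_pol_monom n m (L S : {set 'I_n.-1}) :
  p_pol m L (monom 1 S) = ((S \subset L) && (#|S| == m.-1))%:R.
Proof.
rewrite /p_pol.
rewrite -(@sum_eq_natr _ _
  (fun S' : {set 'I_n.-1} => (S' \subset L) && (#|S'| == m.-1))).
by apply: eq_bigr => S' _; rewrite /mpoly eq_monom eqxx eq_sym.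
Qed.

Lemma f_pol_monom n k (L S : {set 'I_n.-1}) : #|L| = k.+2 ->
  f_pol k.+1 L (monom (k.+1 - #|S|) S) = ((S \subset L) && (#|S| <= k.-1)%N)%:R.
Proof.
move=> cL; rewrite /f_pol subn2 /=.
rewrite -(@sum_eq_natr _ _
  (fun S' : {set 'I_n.-1} => (S' \subset L) && (#|S'| <= k.-1)%N)).
apply: eq_bigr => S' _; rewrite /mpoly eq_monom cL eq_sym.
have [->|] := eqVneq S S'; last by rewrite andbF.
by rewrite andbT subnAC subn1 eqxx.
Qed.

Section Family.
Variables (n k : nat) (L : 'I_('C(n.-1, k.+2)) -> {set 'I_n.-1}).
Hypotheses (hn : n = k.+1.*2.+1) (Linj : injective L) (Lc : forall i, #|L i| = k.+2).
Local Notation D := 'C(n.-1, k.+2).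
Local Notation T := 'I_n.-1.
Implicit Types (xi : 'rV['F_2]_D) (S C : {set T}).

Lemma card_ground : #|[set: T]| = k.*2.+2.
Proof. by rewrite cardsT card_ord hn /= doubleS. Qed.

Definition Lsum xi S := \sum_(i | S \subset L i) xi 0 i.

Lemma lincomb_p_monom xi S :
  lincomb xi (fun i => p_pol k.+1 (L i)) (monom 1 S) =
  if #|S| == k then Lsum xi S else 0.
Proof.
rewrite /lincomb /=; under eq_bigr do rewrite p_pol_monom.
case: ifP => cS; last by apply: big1 => i _; rewrite andbF mulr0.
rewrite /Lsum [RHS]big_mkcond; apply: eq_bigr => i _.
by rewrite andbT; case: (S \subset L i); rewrite ?mulr1 ?mulr0.
Qed.

Lemma lincomb_f_monom xi S :
  lincomb xi (fun i => f_pol k.+1 (L i)) (monom (k.+1 - #|S|) S) =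
  if (#|S| <= k.-1)%N then Lsum xi S else 0.
Proof.
rewrite /lincomb /=; under eq_bigr do rewrite f_pol_monom //.
case: ifP => cS; last by apply: big1 => i _; rewrite andbF mulr0.
rewrite /Lsum [RHS]big_mkcond; apply: eq_bigr => i _.
by rewrite andbT; case: (S \subset L i); rewrite ?mulr1 ?mulr0.
Qed.

Lemma lincomb_p_eq0P xi : zpoly_is0 (lincomb xi (fun i => p_pol k.+1 (L i))) <->
  (forall S, #|S| = k -> Lsum xi S = 0).
Proof.
split=> [xiP S cS|Lsum0 mu].
  by have := xiP (monom 1 S); rewrite lincomb_p_monom cS eqxx.
rewrite /lincomb /p_pol /mpoly.
transitivity (\sum_(i < D) \sum_(S : {set T}) (if (S \subset L i) && (#|S| == k)
   then xi 0 i * (mu == monom 1 S)%:R else 0)).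
  apply: eq_bigr => i _; rewrite mulr_sumr big_mkcond; apply: eq_bigr => S _.
  by case: ifP.
rewrite exchange_big; apply: big1 => S _.
have [cS|_] := eqVneq #|S| k; last by apply: big1 => i _; rewrite andbF.
transitivity ((mu == monom 1 S)%:R * Lsum xi S); last by rewrite Lsum0 ?mulr0.
rewrite /Lsum mulr_sumr [RHS]big_mkcond; apply: eq_bigr => i _.
by rewrite andbT; case: ifP; rewrite ?mulr0 // mulrC.
Qed.

Definition fun_of_row xi : {ffun {set T} -> 'F_2} :=
  [ffun S => \sum_(i | L i == S) xi 0 i].

Lemma fun_of_row_L xi i : fun_of_row xi (L i) = xi 0 i.
Proof.
rewrite ffunE (eq_bigl (pred1 i)) ?big_pred1_eq // => j.
by rewrite /= (inj_eq Linj).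
Qed.

Lemma fun_of_row_inj : injective fun_of_row.
Proof. by move=> x y e; apply/rowP => i; rewrite -!fun_of_row_L e. Qed.

Lemma fun_of_row_funs_on xi : fun_of_row xi \in funs_on [set: T] k.+2.
Proof.
apply: funs_onI => S SS; rewrite ffunE; apply: big1 => i /eqP Li.
by move: SS; rewrite -Li inE subsetT Lc eqxx.
Qed.

Lemma upsum_fun_of_row xi S : upsum [set: T] k.+2 (fun_of_row xi) S = Lsum xi S.
Proof.
rewrite /upsum (eq_bigl xpredT); last by move=> M; apply: subsetT.
transitivity (\sum_(M : {set T}) \sum_(i < D)
   (if (L i == M) && (S \subset L i) then xi 0 i else 0)).
  apply: eq_bigr => M _; rewrite ffunE; case: ifP => [/andP[_ SM]|SM].
    by rewrite big_mkcond; apply: eq_bigr => i _; case: eqP => [->|] //=; rewrite SM.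
  apply/esym/big1 => i _; case: eqP => [Li|] //=.
  by move: SM; rewrite -Li Lc eqxx /= => ->.
rewrite exchange_big /Lsum [RHS]big_mkcond; apply: eq_bigr => i _.
rewrite (bigD1 (L i)) //= eqxx big1 ?addr0 // => M ne.
by rewrite eq_sym (negPf ne).
Qed.

Lemma L_onto S : #|S| = k.+2 -> exists i, L i = S.
Proof.
move=> cS; have sub : L @: [set: 'I_D] \subset [set S : {set T} | #|S| == k.+2].
  by apply/subsetP => _ /imsetP[i _ ->]; rewrite inE Lc.
have ce : #|L @: [set: 'I_D]| = #|[set S : {set T} | #|S| == k.+2]|.
  by rewrite card_imset // cardsT card_ord card_draws card_ord.
have := subset_cardP ce sub => /(_ S); rewrite inE cS eqxx => /imsetP[i _ ->].
by exists i.
Qed.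

Lemma fun_of_rowK h : h \in funs_on [set: T] k.+2 -> fun_of_row (\row_i h (L i)) = h.
Proof.
move=> hT; apply/ffunP => S; rewrite ffunE.
have [SS|SS] := boolP (S \in tsubsets [set: T] k.+2); last first.
  rewrite (funs_on_out hT SS); apply: big1 => i /eqP Li.
  by move: SS; rewrite -Li inE subsetT Lc eqxx.
move: (SS); rewrite inE => /andP[_ /eqP cS]; have [i0 Li0] := L_onto cS.
rewrite (eq_bigl (pred1 i0)) ?big_pred1_eq ?mxE ?Li0 // => j.
by rewrite /= -Li0 (inj_eq Linj).
Qed.

Lemma memXspace_upker xi :
  (xi \in Xspace (fun i => p_pol k.+1 (L i))) = (fun_of_row xi \in upker [set: T] k).
Proof.
apply/idP/idP => [/memXspace/lincomb_p_eq0P Lsum0|xiK].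
  apply: upkerI => [|S]; first exact: fun_of_row_funs_on.
  by rewrite inE => /andP[_ /eqP cS]; rewrite upsum_fun_of_row Lsum0.
apply/memXspace/lincomb_p_eq0P => S cS; rewrite -upsum_fun_of_row.
by apply: upker_upsum xiK _; rewrite inE subsetT cS eqxx.
Qed.

Lemma card_Xspace : #|Xspace (fun i => p_pol k.+1 (L i))| = #|upker [set: T] k|.
Proof.
rewrite -(card_imset _ fun_of_row_inj); apply: eq_card => h.
apply/imsetP/idP => [[xi /[!memXspace_upker] xiK ->//]|hK].
have hT := upker_funs_on hK.
by exists (\row_i h (L i)); rewrite ?memXspace_upker fun_of_rowK.
Qed.

(* A set [L i] contributes to the sum once for each subset of [C :&: L i], so
   an odd number of times exactly when that intersection is empty. *)
Lemma sum_Lsum_subsets xi C :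
  \sum_(S : {set T} | S \subset C) Lsum xi S = \sum_(i | [disjoint C & L i]) xi 0 i.
Proof.
rewrite /Lsum (exchange_big_dep xpredT) //= [RHS]big_mkcond; apply: eq_bigr => i _.
rewrite sumr_const -mulr_natr.
have -> : #|[pred S : {set T} | (S \subset C) && (S \subset L i)]| =
          #|powerset (C :&: L i)|.
  by apply: eq_card => S; rewrite powersetE subsetI.
rewrite card_powerset natr_F2 oddX orbF cards_eq0 setI_eq0.
by case: ifP; rewrite ?mulr1 ?mulr0.
Qed.

Lemma Xspace_f_eq0 xi : zpoly_is0 (lincomb xi (fun i => p_pol k.+1 (L i))) ->
  zpoly_is0 (lincomb xi (fun i => f_pol k.+1 (L i))) -> xi = 0.
Proof.
move=> /lincomb_p_eq0P Lsum_k f0.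
have Lsum0 S : (#|S| <= k)%N -> Lsum xi S = 0.
  rewrite leq_eqVlt => /orP[/eqP|ltSk]; first exact: Lsum_k.
  have := f0 (monom (k.+1 - #|S|) S); rewrite lincomb_f_monom.
  by rewrite -ltnS prednK ?ltSk // (leq_ltn_trans _ ltSk).
apply/rowP => i0; rewrite mxE.
have <- : \sum_(S : {set T} | S \subset ~: L i0) Lsum xi S = xi 0 i0.
  rewrite sum_Lsum_subsets (big_pred1 i0) // => i.
  rewrite /= disjoint_sym disjoints_subset setCK; apply/idP/eqP => [Lii0|->//].
  by apply: Linj; apply/eqP; rewrite eqEcard Lii0 !Lc leqnn.
apply: big1 => S SC; apply: Lsum0.
have := cardsC (L i0); rewrite Lc -cardsT card_ground => cC.
by apply: leq_trans (subset_leq_card SC) _; lia.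
Qed.

End Family.

Theorem lemma7 (n m : nat) (L : 'I_('C(n.-1, m.+1)) -> {set 'I_n.-1}) :
  n = m.*2.+1 -> (5 <= n)%N ->
  injective L -> (forall i, #|L i| = m.+1) ->
  \dim (Xspace (fun i => p_pol m (L i))) = beta n m /\
  (forall Om : seq 'rV['F_2]_('C(n.-1, m.+1)),
     basis_of (Xspace (fun i => p_pol m (L i))) Om ->
     forall c : 'I_(size Om) -> 'F_2,
       zpoly_is0 (fun mu => \sum_(k < size Om)
                    c k * lincomb (nth 0 Om k) (fun i => f_pol m (L i)) mu) ->
       forall k, c k = 0).
Proof.
case: m L => [|k] L hn h5 Linj Lc; first by rewrite hn in h5.
split.
  apply: (@expnI 2) => //.
  rewrite -card_vspace_F2 card_Xspace // (card_upker (card_ground hn)).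
  by rewrite /beta hn /= doubleS -upker_dim_alpha addnK.
move=> Om /andP[/eqP spanOm freeOm] c f0.
pose xi := \sum_(i < size Om) c i *: Om`_i.
have xiX : xi \in Xspace (fun i => p_pol k.+1 (L i)).
  by apply: memv_suml => i _; apply/memvZ; rewrite -spanOm memv_span ?mem_nth.
have xi0 : xi = 0.
  apply: (Xspace_f_eq0 hn Linj Lc); first exact/memXspace.
  by move=> mu; rewrite lincomb_sum; apply: f0.
have /freeP freeOmP : free (in_tuple Om) by [].
exact: freeOmP c xi0.
Qed.
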